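(* Assume $0<a,b<1$, $r>2$, $s>2$, $r>as$, $s>br$, and let $\alpha\in(\tilde\alpha,1)$, $\beta\in(\tilde\beta,1)$. (a) $T_{\alpha,\beta}$ maps $D_{\alpha,\beta}$ into $D_{\alpha,\beta}$, and for every $h\in(0,\min\{\underline c_1(\alpha,\beta),\underline c_2(\alpha,\beta)\})$ it maps $D_{\alpha,\beta}(h)$ into $D_{\alpha,\beta}(h)$. (b) If $1>\tilde\alpha_1\ge\tilde\alpha_2>\tilde\alpha$ and $1>\tilde\beta_1\ge\tilde\beta_2>\tilde\beta$, then $T_{\tilde\alpha_1,\tilde\beta_1}$ maps $D_{\tilde\alpha_2,\tilde\beta_2}$ into $D_{\tilde\alpha_2,\tilde\beta_2}$, and maps $D_{\tilde\alpha_2,\tilde\beta_2}(h)$ into $D_{\tilde\alpha_2,\tilde\beta_2}(h)$ for every $h\in(0,\min\{\underline c_1(\tilde\alpha_2,\tilde\beta_2),\underline c_2(\tilde\alpha_2,\tilde\beta_2)\})$.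
   Context: Let $f(\alpha,x,y)=x[(1-\alpha)e^{r-x-ay}+\alpha]$, $g(\beta,x,y)=y[(1-\beta)e^{s-bx-y}+\beta]$, $T_{\alpha,\beta}(x,y)=(f(\alpha,x,y),g(\beta,x,y))$. Define $\mathcal H_1(\alpha)=\max\{(1-\alpha)e^{r-1}+2\alpha,\,r\}$, $\mathcal H_2(\beta)=\max\{(1-\beta)e^{s-1}+2\beta,\,s\}$, $c_1(\beta)=r-a\mathcal H_2(\beta)$, $c_2(\alpha)=s-b\mathcal H_1(\alpha)$, $\tilde\alpha=\max\{\frac{e^{r-1}-s/b}{e^{r-1}-2},0\}$, $\tilde\beta=\max\{\frac{e^{s-1}-r/a}{e^{s-1}-2},0\}$. For $\alpha\in(\tilde\alpha,1)$, $\beta\in(\tilde\beta,1)$: $\underline c_1(\alpha,\beta)=\min\{f(\alpha,x,y):x\in[c_1(\beta),\mathcal H_1(\alpha)],y\in[0,\mathcal H_2(\beta)]\}$, $\underline c_2(\alpha,\beta)=\min\{g(\beta,x,y):x\in[0,\mathcal H_1(\alpha)],y\in[c_2(\alpha),\mathcal H_2(\beta)]\}$ (both are positive), $D_{\alpha,\beta}=[\underline c_1(\alpha,\beta),\mathcal H_1(\alpha)]\times[\underline c_2(\alpha,\beta),\mathcal H_2(\beta)]$ and, for $h\in(0,\min\{\underline c_1(\alpha,\beta),\underline c_2(\alpha,\beta)\})$, $D_{\alpha,\beta}(h)=[\underline c_1(\alpha,\beta)-h,\mathcal H_1(\alpha)]\times[\underline c_2(\alpha,\beta)-h,\mathcal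 H_2(\beta)]$. *)

From Stdlib Require Import Reals Lra ClassicalEpsilon.
Open Scope R_scope.

Definition f (r a alpha x y : R) : R :=
  x * ((1 - alpha) * exp (r - x - a * y) + alpha).
Definition g (s b beta x y : R) : R :=
  y * ((1 - beta) * exp (s - b * x - y) + beta).
Definition T (r s a b alpha beta : R) (p : R * R) : R * R :=
  (f r a alpha (fst p) (snd p), g s b beta (fst p) (snd p)).

Definition H1 (r alpha : R) : R := Rmax ((1 - alpha) * exp (r - 1) + 2 * alpha) r.
Definition H2 (s beta : R) : R := Rmax ((1 - beta) * exp (s - 1) + 2 * beta) s.
Definition c1 (r s a beta : R) : R := r - a * H2 s beta.
Definition c2 (r s b alpha : R) : R := s - b * H1 r alpha.
Definition alpha_tilde (r s b : R) : R :=
  Rmax ((exp (r - 1) - s / b) / (exp (r - 1) - 2)) 0.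
Definition beta_tilde (r s a : R) : R :=
  Rmax ((exp (s - 1) - r / a) / (exp (s - 1) - 2)) 0.

Definition IsMinOn (F : R -> R -> R) (x0 x1 y0 y1 m : R) : Prop :=
  (exists x y, x0 <= x <= x1 /\ y0 <= y <= y1 /\ F x y = m) /\
  (forall x y, x0 <= x <= x1 -> y0 <= y <= y1 -> m <= F x y).
Definition minOn (F : R -> R -> R) (x0 x1 y0 y1 : R) : R :=
  epsilon (inhabits 0) (fun m => IsMinOn F x0 x1 y0 y1 m).

Definition cl1 (r s a b alpha beta : R) : R :=
  minOn (f r a alpha) (c1 r s a beta) (H1 r alpha) 0 (H2 s beta).
Definition cl2 (r s a b alpha beta : R) : R :=
  minOn (g s b beta) 0 (H1 r alpha) (c2 r s b alpha) (H2 s beta).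

Definition D (r s a b alpha beta : R) (p : R * R) : Prop :=
  cl1 r s a b alpha beta <= fst p <= H1 r alpha /\
  cl2 r s a b alpha beta <= snd p <= H2 s beta.
Definition Dh (r s a b alpha beta h : R) (p : R * R) : Prop :=
  cl1 r s a b alpha beta - h <= fst p <= H1 r alpha /\
  cl2 r s a b alpha beta - h <= snd p <= H2 s beta.

(** Since [y >= 0] and [x e^(r-x) <= e^(r-1)], the first coordinate
    satisfies [f(x,y) <= x((1-α)e^(r-x) + α) <= (1-α)e^(r-1) + αx]; the
    middle function is convex on [[2, r]], hence bounded there by its values at
    [2] and at [r], so [f <= H1(α)] whenever [r - x - a y >= 0], and otherwise
    [f(x,y) <= x].  From below, [f(x,y) >= x] whenever [r - x - a y >= 0],
    which covers every [x < c1]; for [x >= c1] the value is at least the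
    minimum [cl1] over the rectangle.  Raising [α] only moves [f(x,y)] towards
    [x], which yields the comparison statement (b).  The thresholds [α > α~]
    and [β > β~] are exactly what makes [c2] and [c1] positive, and [g] is [f]
    with the two variables exchanged, so the second coordinate is handled by
    the same lemmas. *)

From Stdlib Require Import Reals Lra ClassicalEpsilon.
From Coquelicot Require Import Coquelicot.
Open Scope R_scope.

Lemma exp_le_compat x y : x <= y -> exp x <= exp y.
Proof. intros [Hlt | ->]; [left; now apply exp_increasing | lra]. Qed.

Lemma mul_exp_le x u : x * exp (u - x) <= exp (u - 1).
Proof.
  replace (u - 1) with ((u - x) + (x - 1)) by ring. rewrite exp_plus.
  pose proof (exp_ineq1_le (x - 1)). pose proof (exp_pos (u - x)). nra.
Qed.

Definition ricker (r al x : R) : R := x * ((1 - al) * exp (r - x) + al).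
Definition ricker' (r al x : R) : R := (1 - al) * (1 - x) * exp (r - x) + al.

Lemma ricker_derive r al x : derivable_pt_lim (ricker r al) x (ricker' r al x).
Proof.
  apply is_derive_Reals. unfold ricker, ricker'. auto_derive; [easy|]. unfold Rminus. ring.
Qed.

Lemma ricker'_le r al x y : al <= 1 -> 2 <= x <= y -> ricker' r al x <= ricker' r al y.
Proof.
  intros Hal Hxy. unfold ricker'.
  assert (Hxy' : (1 - x) * exp (r - x) <= (1 - y) * exp (r - y)).
  { replace (r - x) with ((r - y) + (y - x)) by ring. rewrite exp_plus.
    pose proof (exp_ineq1_le (y - x)). pose proof (exp_pos (r - y)).
    assert ((1 - x) * exp (y - x) <= 1 - y) by nra. nra. }
  nra.
Qed.

Lemma ricker_le_Rmax_ends r al u v x : al <= 1 -> 2 <= u -> u <= x <= v ->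
  ricker r al x <= Rmax (ricker r al u) (ricker r al v).
Proof.
  intros Hal Hu Hx.
  destruct (Rle_lt_dec 0 (ricker' r al x)) as [Hd | Hd].
  - apply Rle_trans with (ricker r al v); [|apply Rmax_r].
    destruct (Req_dec x v) as [-> | Hne]; [lra|].
    destruct (MVT_cor2 (ricker r al) (ricker' r al) x v) as [c [Hc Hcx]];
      [lra | intros; apply ricker_derive |].
    pose proof (ricker'_le r al x c Hal ltac:(lra)). nra.
  - apply Rle_trans with (ricker r al u); [|apply Rmax_l].
    destruct (Req_dec u x) as [-> | Hne]; [lra|].
    destruct (MVT_cor2 (ricker r al) (ricker' r al) u x) as [c [Hc Hcx]];
      [lra | intros; apply ricker_derive |].
    pose proof (ricker'_le r al c x Hal ltac:(lra)). nra.
Qed.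

Lemma ricker_le_peak r al x : al <= 1 ->
  ricker r al x <= (1 - al) * exp (r - 1) + al * x.
Proof. intros Hal. unfold ricker. pose proof (mul_exp_le x r). nra. Qed.

Lemma ricker_le_H1 r al x : 2 < r -> 0 <= al <= 1 -> 0 <= x <= r ->
  ricker r al x <= H1 r al.
Proof.
  intros Hr Hal Hx. unfold H1.
  assert (Hpeak : forall z, 0 <= z <= 2 ->
            ricker r al z <= Rmax ((1 - al) * exp (r - 1) + 2 * al) r).
  { intros z Hz. eapply Rle_trans; [|apply Rmax_l].
    pose proof (ricker_le_peak r al z). nra. }
  destruct (Rle_lt_dec x 2) as [Hx2 | Hx2]; [apply Hpeak; lra|].
  eapply Rle_trans; [apply (ricker_le_Rmax_ends r al 2 r); lra|].
  apply Rmax_lub; [apply Hpeak; lra|].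
  replace (ricker r al r) with r; [apply Rmax_r|].
  unfold ricker. rewrite Rminus_diag, exp_0. ring.
Qed.

Section FirstCoordinate.
Variables r a : R.
Hypothesis a_nonneg : 0 <= a.

Lemma f_at_0 al x : f r a al x 0 = ricker r al x.
Proof. unfold f, ricker. now rewrite Rmult_0_r, Rminus_0_r. Qed.

Lemma f_antitone_y al x y y' : 0 <= x -> al <= 1 -> y <= y' ->
  f r a al x y' <= f r a al x y.
Proof.
  intros Hx Hal Hy. unfold f.
  assert (a * y <= a * y') by (apply Rmult_le_compat_l; lra).
  pose proof (exp_le_compat (r - x - a * y') (r - x - a * y) ltac:(lra)).
  apply Rmult_le_compat_l; [lra|]. apply Rplus_le_compat_r.
  apply Rmult_le_compat_l; lra.
Qed.

Lemma f_ge_id al x y : 0 <= x -> al <= 1 -> 0 <= r - x - a * y -> x <= f r a al x y.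
Proof.
  intros Hx Hal Hu. unfold f.
  pose proof (exp_ineq1_le (r - x - a * y)).
  assert (Hc : 1 <= (1 - al) * exp (r - x - a * y) + al) by nra.
  pose proof (Rmult_le_compat_l x _ _ Hx Hc). lra.
Qed.

Lemma f_le_id al x y : 0 <= x -> al <= 1 -> r - x - a * y <= 0 -> f r a al x y <= x.
Proof.
  intros Hx Hal Hu. unfold f.
  pose proof (exp_le_compat _ _ Hu) as He. rewrite exp_0 in He.
  assert (Hc : (1 - al) * exp (r - x - a * y) + al <= 1) by nra.
  pose proof (Rmult_le_compat_l x _ _ Hx Hc). lra.
Qed.

Lemma f_antitone_alpha al1 al2 x y : 0 <= x -> al2 <= al1 -> 0 <= r - x - a * y ->
  f r a al1 x y <= f r a al2 x y.
Proof.
  intros Hx Hal Hu. unfold f.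
  pose proof (exp_ineq1_le (r - x - a * y)).
  assert (0 <= x * ((al1 - al2) * (exp (r - x - a * y) - 1))) by
    (apply Rmult_le_pos; [|apply Rmult_le_pos]; lra).
  nra.
Qed.

Lemma f_monotone_alpha al1 al2 x y : 0 <= x -> al2 <= al1 -> r - x - a * y <= 0 ->
  f r a al2 x y <= f r a al1 x y.
Proof.
  intros Hx Hal Hu. unfold f.
  pose proof (exp_le_compat _ _ Hu) as He. rewrite exp_0 in He.
  assert (0 <= x * ((al1 - al2) * (1 - exp (r - x - a * y)))) by
    (apply Rmult_le_pos; [|apply Rmult_le_pos]; lra).
  nra.
Qed.

Lemma f_pos al x y : 0 < x -> 0 <= al < 1 -> 0 < f r a al x y.
Proof.
  intros Hx Hal. unfold f. pose proof (exp_pos (r - x - a * y)).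
  apply Rmult_lt_0_compat; [lra | nra].
Qed.

Lemma f_le_H1 al1 al2 x y : 2 < r -> 0 <= al2 <= al1 -> al1 <= 1 ->
  0 <= x <= H1 r al2 -> 0 <= y -> f r a al1 x y <= H1 r al2.
Proof.
  intros Hr Hal Hal1 Hx Hy.
  destruct (Rle_lt_dec 0 (r - x - a * y)) as [Hu | Hu].
  - apply Rle_trans with (f r a al2 x y); [apply f_antitone_alpha; lra|].
    apply Rle_trans with (f r a al2 x 0); [apply f_antitone_y; lra|].
    rewrite f_at_0. apply ricker_le_H1; nra.
  - pose proof (f_le_id al1 x y). lra.
Qed.

Lemma f_ge_of_IsMinOn al1 al2 M H m L x y : al2 <= al1 <= 1 ->
  IsMinOn (f r a al2) (r - a * M) H 0 M m -> 0 <= L <= m ->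
  L <= x <= H -> 0 <= y <= M -> L <= f r a al1 x y.
Proof.
  intros Hal [_ Hmin] HL Hx Hy.
  destruct (Rle_lt_dec 0 (r - x - a * y)) as [Hu | Hu].
  - pose proof (f_ge_id al1 x y). lra.
  - (* [r - x - a y < 0 <= r - (r - a M) - a y] puts [x] in the rectangle. *)
    pose proof (Hmin x y ltac:(nra) ltac:(lra)).
    pose proof (f_monotone_alpha al1 al2 x y). lra.
Qed.

Lemma f_IsMinOn_exists al x0 x1 y0 y1 : 0 <= x0 <= x1 -> y0 <= y1 -> al <= 1 ->
  exists m, IsMinOn (f r a al) x0 x1 y0 y1 m.
Proof.
  intros Hx Hy Hal.
  destruct (continuity_ab_min (fun x => f r a al x y1) x0 x1) as [xm [Hxm Hb]];
    [lra | intros; unfold f; reg |].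
  exists (f r a al xm y1). split.
  - exists xm, y1. repeat split; lra.
  - intros x y Hx' Hy'. apply Rle_trans with (f r a al x y1);
      [apply Hxm; lra | apply f_antitone_y; lra].
Qed.

Lemma f_IsMinOn_pos al x0 x1 y0 y1 m : 0 < x0 -> 0 <= al < 1 ->
  IsMinOn (f r a al) x0 x1 y0 y1 m -> 0 < m.
Proof.
  intros Hx0 Hal [[x [y [Hx [_ <-]]]] _]. apply f_pos; lra.
Qed.

End FirstCoordinate.

Lemma minOn_spec F x0 x1 y0 y1 : (exists m, IsMinOn F x0 x1 y0 y1 m) ->
  IsMinOn F x0 x1 y0 y1 (minOn F x0 x1 y0 y1).
Proof. exact (epsilon_spec (inhabits 0) _). Qed.

Lemma IsMinOn_swap F G x0 x1 y0 y1 m : (forall x y, G x y = F y x) ->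
  IsMinOn F y0 y1 x0 x1 m -> IsMinOn G x0 x1 y0 y1 m.
Proof.
  intros HG [[x [y [Hx [Hy <-]]]] Hmin]. split.
  - exists y, x. rewrite HG. auto.
  - intros x' y' Hx' Hy'. rewrite HG. auto.
Qed.

Lemma g_eq_f_swap s b be x y : g s b be x y = f s b be y x.
Proof. unfold f, g. replace (s - y - b * x) with (s - b * x - y) by ring. reflexivity. Qed.

Lemma H1_ge r al : r <= H1 r al.
Proof. apply Rmax_r. Qed.

Lemma c1_pos r s a be : 0 < a -> 2 < s -> a * s < r -> beta_tilde r s a < be ->
  0 < c1 r s a be.
Proof.
  intros Ha Hs Hrs Hbe. unfold c1, H2, Rmax.
  destruct (Rle_dec _ _); [lra|].
  assert (He : 2 < exp (s - 1)).
  { pose proof (exp_ineq1_le (s - 1)). lra. }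
  (* [β > β~] unfolds to [(1 - β) e^(s-1) + 2β < r / a]. *)
  assert (Hq : (exp (s - 1) - r / a) / (exp (s - 1) - 2) < be).
  { pose proof (Rmax_l ((exp (s - 1) - r / a) / (exp (s - 1) - 2)) 0).
    unfold beta_tilde in Hbe. lra. }
  apply Rmult_lt_compat_r with (r := exp (s - 1) - 2) in Hq; [|lra].
  unfold Rdiv in Hq. rewrite Rmult_assoc, Rinv_l in Hq by lra.
  assert (Hra : a * (r * / a) = r) by (field; lra).
  nra.
Qed.

Section Invariance.
Variables a b r s al1 al2 be1 be2 : R.
Hypotheses (a_pos : 0 < a) (b_pos : 0 < b) (r_gt2 : 2 < r) (s_gt2 : 2 < s)
  (as_lt_r : a * s < r) (br_lt_s : b * r < s).
Hypotheses (al2_gt : alpha_tilde r s b < al2) (al2_le : al2 <= al1) (al1_le1 : al1 <= 1)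
  (al2_lt1 : al2 < 1).
Hypotheses (be2_gt : beta_tilde r s a < be2) (be2_le : be2 <= be1) (be1_le1 : be1 <= 1)
  (be2_lt1 : be2 < 1).

Let al2_nonneg : 0 <= al2.
Proof. assert (0 <= alpha_tilde r s b) by apply Rmax_r. lra. Qed.

Let be2_nonneg : 0 <= be2.
Proof. assert (0 <= beta_tilde r s a) by apply Rmax_r. lra. Qed.

Let c1_gt0 : 0 < c1 r s a be2.
Proof. now apply c1_pos. Qed.

Let c2_gt0 : 0 < c2 r s b al2.
Proof. exact (c1_pos s r b al2 b_pos r_gt2 br_lt_s al2_gt). Qed.

Let cl1_spec : IsMinOn (f r a al2) (c1 r s a be2) (H1 r al2) 0 (H2 s be2)
  (cl1 r s a b al2 be2).
Proof.
  pose proof (H1_ge s be2 : s <= H2 s be2) as HsH. pose proof (H1_ge r al2) as HrH.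
  assert (0 <= a * H2 s be2) by (apply Rmult_le_pos; lra).
  apply minOn_spec, f_IsMinOn_exists; unfold c1 in *; lra.
Qed.

Let cl2_spec : IsMinOn (f s b be2) (c2 r s b al2) (H2 s be2) 0 (H1 r al2)
  (cl2 r s a b al2 be2).
Proof.
  pose proof (H1_ge s be2 : s <= H2 s be2) as HsH. pose proof (H1_ge r al2) as HrH.
  apply (IsMinOn_swap (g s b be2)); [intros; now rewrite g_eq_f_swap|].
  apply minOn_spec.
  assert (0 <= b * H1 r al2) by (apply Rmult_le_pos; lra).
  destruct (f_IsMinOn_exists s b ltac:(lra) be2 (c2 r s b al2) (H2 s be2) 0 (H1 r al2))
    as [m Hm]; unfold c2 in *; try lra.
  exists m. apply (IsMinOn_swap (f s b be2)); [intros; apply g_eq_f_swap | exact Hm].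
Qed.

Let cl1_gt0 : 0 < cl1 r s a b al2 be2.
Proof. exact (f_IsMinOn_pos r a al2 _ _ _ _ _ c1_gt0 ltac:(lra) cl1_spec). Qed.

Let cl2_gt0 : 0 < cl2 r s a b al2 be2.
Proof. exact (f_IsMinOn_pos s b be2 _ _ _ _ _ c2_gt0 ltac:(lra) cl2_spec). Qed.

Lemma T_maps_box L1 L2 p :
  0 < L1 <= cl1 r s a b al2 be2 -> 0 < L2 <= cl2 r s a b al2 be2 ->
  L1 <= fst p <= H1 r al2 -> L2 <= snd p <= H2 s be2 ->
  (L1 <= fst (T r s a b al1 be1 p) <= H1 r al2) /\
  (L2 <= snd (T r s a b al1 be1 p) <= H2 s be2).
Proof.
  destruct p as [x y]; simpl. intros HL1 HL2 Hx Hy.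
  rewrite g_eq_f_swap. repeat split.
  - apply (f_ge_of_IsMinOn r a ltac:(lra) al1 al2 (H2 s be2) (H1 r al2)
             (cl1 r s a b al2 be2)); auto; lra.
  - apply f_le_H1; lra.
  - apply (f_ge_of_IsMinOn s b ltac:(lra) be1 be2 (H1 r al2) (H2 s be2)
             (cl2 r s a b al2 be2)); auto; lra.
  - change (H2 s be2) with (H1 s be2) in Hy |- *.
    apply (f_le_H1 s b ltac:(lra) be1 be2); lra.
Qed.

Lemma T_maps_D p : D r s a b al2 be2 p -> D r s a b al2 be2 (T r s a b al1 be1 p).
Proof. intros [Hx Hy]. apply T_maps_box; lra. Qed.

Lemma T_maps_Dh h : 0 < h < Rmin (cl1 r s a b al2 be2) (cl2 r s a b al2 be2) ->
  forall p, Dh r s a b al2 be2 h p -> Dh r s a b al2 be2 h (T r s a b al1 be1 p).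
Proof.
  intros Hh p [Hx Hy].
  pose proof (Rmin_l (cl1 r s a b al2 be2) (cl2 r s a b al2 be2)).
  pose proof (Rmin_r (cl1 r s a b al2 be2) (cl2 r s a b al2 be2)).
  apply T_maps_box; lra.
Qed.

End Invariance.

Theorem mainTheorem3 (a b r s : R) :
  0 < a < 1 -> 0 < b < 1 -> r > 2 -> s > 2 -> r > a * s -> s > b * r ->
  (forall alpha beta : R,
     alpha_tilde r s b < alpha < 1 -> beta_tilde r s a < beta < 1 ->
     (forall p, D r s a b alpha beta p -> D r s a b alpha beta (T r s a b alpha beta p)) /\
     (forall h, 0 < h < Rmin (cl1 r s a b alpha beta) (cl2 r s a b alpha beta) ->
        forall p, Dh r s a b alpha beta h p ->
          Dh r s a b alpha beta h (T r s a b alpha beta p))) /\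
  (forall alpha1 alpha2 beta1 beta2 : R,
     alpha1 < 1 -> alpha2 <= alpha1 -> alpha2 > alpha_tilde r s b ->
     beta1 < 1 -> beta2 <= beta1 -> beta2 > beta_tilde r s a ->
     (forall p, D r s a b alpha2 beta2 p -> D r s a b alpha2 beta2 (T r s a b alpha1 beta1 p)) /\
     (forall h, 0 < h < Rmin (cl1 r s a b alpha2 beta2) (cl2 r s a b alpha2 beta2) ->
        forall p, Dh r s a b alpha2 beta2 h p ->
          Dh r s a b alpha2 beta2 h (T r s a b alpha1 beta1 p))).
Proof.
  intros Ha Hb Hr Hs Hrs Hsr. split.
  - intros al be Hal Hbe. split; [apply T_maps_D | apply T_maps_Dh]; lra.
  - intros al1 al2 be1 be2 **. split; [apply T_maps_D | apply T_maps_Dh]; lra.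
Qed.
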